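(* Suppose $G=(V,E)$ is a complete graph whose nonnegative edge costs $c$ satisfy the triangle inequality, and let $R\subseteq V$ be the terminal set. Then the cost of a minimum spanning tree of the induced subgraph $G[R]$ is at most twice the optimal value of the hypergraphic LP \[ \min \sum_K C_K x_K \quad\text{s.t.}\quad \sum_{K:\,K\cap S\neq\varnothing} x_K(|K\cap S|-1)\le |S|-1\ \ \forall\, \varnothing\neq S\subseteq R,\quad \sum_K x_K(|K|-1)=|R|-1,\quad x\ge 0. \]
   Context: For $K\subseteq R$ with $|K|\ge2$, a full component on $K$ is a tree in $G$ whose leaf set is exactly $K$ and whose internal vertices all lie in $V\setminus R$; $C_K$ is the minimum cost of a full component on $K$, and the LP variables $x_K$ range over such $K$ for which a full component exists. *)

From HB Require Import structures.
From mathcomp Require Import all_boot all_order all_algebra.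
From Stdlib Require Import ClassicalEpsilon.
Set Implicit Arguments. Unset Strict Implicit. Unset Printing Implicit Defensive.
Import Order.TTheory GRing.Theory Num.Theory.
Local Open Scope ring_scope.

(* Since G is the
   complete graph on V, every 2-subset of V is an edge of G. *)
Definition asbool (P : Prop) : bool :=
  if excluded_middle_informative P then true else false.

Section Graphs.
Variable V : finType.

Definition is_edge (e : {set V}) : bool := #|e| == 2%N.

Definition adj (E : {set {set V}}) : rel V := fun u v => [set u; v] \in E.

Definition verts (E : {set {set V}}) : {set V} := \bigcup_(e in E) e.

Definition deg (E : {set {set V}}) (v : V) : nat := #|[set e in E | v \in e]|.

Definition leaves (E : {set {set V}}) : {set V} := [set v | deg E v == 1%N].

Definition internal (E : {set {set V}}) : {set V} := verts E :\: leaves E.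

Definition acyclic (E : {set {set V}}) : Prop :=
  forall p : seq V, uniq p -> (2 < size p)%N -> ~~ cycle (adj E) p.

Definition connected_on (E : {set {set V}}) (W : {set V}) : Prop :=
  forall u v, u \in W -> v \in W -> connect (adj E) u v.

Definition is_tree (E : {set {set V}}) : Prop :=
  [/\ {in E, forall e, is_edge e}, connected_on E (verts E) & acyclic E].

Definition is_full_component (R K : {set V}) (E : {set {set V}}) : Prop :=
  [/\ is_tree E, leaves E = K & internal E \subset ~: R].

Definition is_spanning_tree (R : {set V}) (E : {set {set V}}) : Prop :=
  [/\ {in E, forall e, is_edge e && (e \subset R)}, connected_on E R & acyclic E].

End Graphs.

Section Costs.
Variables (V : finType) (F : realFieldType).
Variable c : {set V} -> F.

Definition tree_cost (E : {set {set V}}) : F := \sum_(e in E) c e.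

Definition has_full_component (R K : {set V}) : Prop :=
  exists E, is_full_component R K E.

(* C_K: minimum cost of a full component on K (meaningful when one exists) *)
Definition CK (R K : {set V}) : F :=
  tree_cost (Order.arg_min set0
    (fun E : {set {set V}} => asbool (is_full_component R K E)) tree_cost).

Definition mst_cost (R : {set V}) : F :=
  tree_cost (Order.arg_min set0
    (fun E : {set {set V}} => asbool (is_spanning_tree R E)) tree_cost).

Definition lp_index (R K : {set V}) : bool :=
  [&& K \subset R, (2 <= #|K|)%N & asbool (has_full_component R K)].

Definition lp_feasible (R : {set V}) (x : {set V} -> F) : Prop :=
  [/\ (forall K, lp_index R K -> 0 <= x K),
      (forall S : {set V}, S \subset R -> S != set0 ->
         \sum_(K | lp_index R K && (K :&: S != set0))
            x K * (#|K :&: S|%:R - 1) <= #|S|%:R - 1)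
    & \sum_(K | lp_index R K) x K * (#|K|%:R - 1) = #|R|%:R - 1].

Definition lp_objective (R : {set V}) (x : {set V} -> F) : F :=
  \sum_(K | lp_index R K) CK R K * x K.

End Costs.

(* Given a feasible x, double a cheapest full component on each K and shortcut
   it (triangle inequality) into a walk through exactly the vertices of K, of
   cost at most 2 C_K; give each consecutive pair of that walk the weight x_K.
   A walk through K crosses a partition of R at least (#classes met by K) - 1
   times, so the subtour constraints make the weighted pairs dominate a point
   of the partition polytope of R: every partition into p classes is crossed
   with total weight at least p - 1.  Kruskal's algorithm, contracting a
   cheapest crossing pair at each step, then yields a connected spanning edge
   set of G[R] costing no more than the weighted pairs, i.e. at most
   2 sum_K C_K x_K. *)

From HB Require Import structures.
From mathcomp Require Import all_boot all_order all_algebra.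
From Stdlib Require Import ClassicalEpsilon.
Import Order.TTheory GRing.Theory Num.Theory.
Local Open Scope ring_scope.
Set Implicit Arguments. Unset Strict Implicit. Unset Printing Implicit Defensive.

Lemma ler_sum_seq_cond (T : eqType) (F : numDomainType) (s : seq T) (P Q : pred T)
    (g : T -> F) :
  {in s, forall t, P t -> Q t} -> {in s, forall t, Q t -> 0 <= g t} ->
  \sum_(t <- s | P t) g t <= \sum_(t <- s | Q t) g t.
Proof.
move=> PQ g0; rewrite big_mkcond [X in _ <= X]big_mkcond /=.
rewrite big_seq [X in _ <= X]big_seq; apply: ler_sum => t st.
by case: ifP => [/(PQ _ st) ->|_] //; case: ifP => // /(g0 _ st).
Qed.

Lemma ler_sum_subset (I : finType) (F : numDomainType) (A B : {set I}) (g : I -> F) :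
  A \subset B -> {in B, forall i, 0 <= g i} -> \sum_(i in A) g i <= \sum_(i in B) g i.
Proof. by move=> AB g0; apply: ler_sum_seq_cond => i _; [exact: (subsetP AB) | exact: g0]. Qed.

Lemma ler_sum_setU1 (I : finType) (F : numDomainType) (g : I -> F) (i : I) (A : {set I}) :
  0 <= g i -> \sum_(j in i |: A) g j <= g i + \sum_(j in A) g j.
Proof.
move=> gi0; have [iA|iA] := boolP (i \in A); last by rewrite big_setU1.
by rewrite (setUidPr _) ?sub1set // lerDr.
Qed.

Lemma is_edge_set2 (V : finType) (x y : V) : x != y -> is_edge [set x; y].
Proof. by move=> xy; rewrite /is_edge cards2 xy. Qed.

Lemma asboolT (P : Prop) : P -> asbool P.
Proof. by rewrite /asbool; case: excluded_middle_informative. Qed.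

Lemma asboolP (P : Prop) : asbool P -> P.
Proof. by rewrite /asbool; case: excluded_middle_informative. Qed.

(* Unlike [arg_minP], the default [i0] need not satisfy [P]. *)
Lemma arg_min_nonempty (d : Order.disp_t) (T : orderType d) (I : finType) (P : pred I)
    (g : I -> T) (i0 i1 : I) :
  P i1 -> P (Order.arg_min i0 P g) /\
          (forall j, P j -> (g (Order.arg_min i0 P g) <= g j)%O).
Proof.
move=> Pi1; have := @extremumP T I <=%O i1 P g le_refl (@le_trans _ T) le_total Pi1.
rewrite /Order.arg_min /extremum; case: pickP => [i _ /= [] | no_i [j Pj minj]] //.
by have := no_i j; rewrite /= Pj (introT forall_inP minj).
Qed.

Section Connectivity.
Variable V : finType.
Implicit Types (E : {set {set V}}) (a b u v : V).

Lemma adjC E : symmetric (adj E).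
Proof. by move=> u v; rewrite /adj setUC. Qed.

Lemma connectC E u v : connect (adj E) u v = connect (adj E) v u.
Proof. exact/sym_connect_sym/adjC. Qed.

Lemma connect_set0 u v : connect (adj set0) u v -> v = u.
Proof. by case/connectP=> [[|w p] /= up ->] //; move: up; rewrite /adj inE. Qed.

Lemma connect_setD1_edge E a b v u :
  let E' := E :\ [set a; b] in
  connect (adj E) v u ->
  connect (adj E') v u \/
  ((connect (adj E') a v \/ connect (adj E') b v) /\
   (connect (adj E') a u \/ connect (adj E') b u)).
Proof.
move=> E'.
pose P x := connect (adj E') v x \/
  ((connect (adj E') a v \/ connect (adj E') b v) /\
   (connect (adj E') a x \/ connect (adj E') b x)).
suff Ppath x p : P x -> path (adj E) x p -> P (last x p).
  by case/connectP=> p vp ->; apply: Ppath => //; left.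
elim: p x => [|y p IH] x //= Px /andP[xy yp]; apply: IH yp.
have [xy_ab|xy_ab] := eqVneq [set x; y] [set a; b].
  have ends z : z \in [set x; y] -> connect (adj E') a z \/ connect (adj E') b z.
    by rewrite xy_ab !inE => /orP[] /eqP ->; [left|right].
  right; split; last by apply: ends; rewrite !inE eqxx orbT.
  case: Px => [vx|[]//]; have [] := ends x; rewrite ?inE ?eqxx //.
  - by move=> ax; left; apply: connect_trans ax _; rewrite connectC.
  - by move=> bx; right; apply: connect_trans bx _; rewrite connectC.
have xy' : adj E' x y by rewrite /adj /E' !inE xy_ab.
case: Px => [vx|[v_ab x_ab]]; first by left; apply: connect_trans vx (connect1 xy').
by right; split=> //; case: x_ab => cx; [left|right]; apply: connect_trans cx (connect1 xy').
Qed.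

Definition component E a : {set V} := [set z | connect (adj E) a z].

Definition component_edges E a : {set {set V}} :=
  [set f in E | f \subset component E a].

Lemma component_edges_sub E a : component_edges E a \subset E.
Proof. by apply/subsetP => f; rewrite inE => /andP[]. Qed.

Lemma connect_component_edges E a u :
  connect (adj E) a u -> connect (adj (component_edges E a)) a u.
Proof.
suff Ppath x p : connect (adj E) a x -> connect (adj (component_edges E a)) a x ->
    path (adj E) x p -> connect (adj (component_edges E a)) a (last x p).
  by case/connectP=> p ap ->; apply: Ppath.
elim: p x => [|y p IH] x //= ax ax' /andP[xy yp].
have ay : connect (adj E) a y by apply: connect_trans ax (connect1 xy).
apply: IH yp => //; apply: connect_trans ax' (connect1 _).
rewrite /adj inE; move: xy; rewrite /adj => ->.
by apply/subsetP => z; rewrite !inE => /orP[] /eqP ->.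
Qed.

Lemma component_edges_disjoint E a b :
  {in E, forall e, is_edge e} -> ~~ connect (adj E) a b ->
  [disjoint component_edges E a & component_edges E b].
Proof.
move=> Eedge nab; rewrite -setI_eq0; apply/eqP/setP => f; rewrite !inE.
apply/negbTE/negP => /and3P[/andP[fE fa] _ fb].
have /card_gt0P[z fz] : (0 < #|f|)%N by rewrite (eqP (Eedge f fE)).
move: (subsetP fa z fz) (subsetP fb z fz); rewrite !inE => az bz.
by move/negP: nab; apply; apply: connect_trans az _; rewrite connectC.
Qed.

Lemma component_setD1_bridge E a b v :
  let E' := E :\ [set a; b] in
  ~~ (component E v \subset component E' v) ->
  ~~ connect (adj E') a b /\ component E v \subset component E' a :|: component E' b.
Proof.
move=> E'; case/subsetPn=> u0; rewrite !inE => vu0 nvu0.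
have [vu0'|[v_ab u0_ab]] := connect_setD1_edge a b vu0; first by rewrite vu0' in nvu0.
split.
  apply: contra nvu0 => ab.
  have toA z : connect (adj E') a z \/ connect (adj E') b z -> connect (adj E') a z.
    by case=> // /(connect_trans ab).
  by apply: connect_trans (toA _ u0_ab); rewrite connectC; apply: toA.
apply/subsetP => u; rewrite !inE => /(connect_setD1_edge a b)[vu|[_ u_ab]]; apply/orP => //.
by case: v_ab => [av|bv]; [left|right]; apply: connect_trans vu.
Qed.

End Connectivity.

Section Walks.
Variables (V : finType) (F : realFieldType) (c : {set V} -> F).
Hypothesis c_ge0 : forall e : {set V}, is_edge e -> 0 <= c e.
Hypothesis c_triangle : forall u v w : V, u != v -> v != w -> u != w ->
  c [set u; w] <= c [set u; v] + c [set v; w].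

Definition dist (x y : V) : F := if x == y then 0 else c [set x; y].

Fixpoint walk_cost (x : V) (s : seq V) : F :=
  if s is y :: s' then dist x y + walk_cost y s' else 0.

Definition tour_cost (s : seq V) : F :=
  if s is x :: t then walk_cost x (rcons t x) else 0.

Lemma dist_ge0 x y : 0 <= dist x y.
Proof. by rewrite /dist; case: eqVneq => // xy; exact/c_ge0/is_edge_set2. Qed.

Lemma distC x y : dist x y = dist y x.
Proof. by rewrite /dist eq_sym setUC. Qed.

Lemma dist_triangle x y z : dist x z <= dist x y + dist y z.
Proof.
rewrite /dist; case: (eqVneq x z) => [->|xz]; first by rewrite addr_ge0 // -/(dist _ _) dist_ge0.
case: (eqVneq x y) => [<-|xy]; first by rewrite (negbTE xz) add0r.
case: (eqVneq y z) => [->|yz]; first by rewrite addr0.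
exact: c_triangle.
Qed.

Lemma walk_cost_cat x s t :
  walk_cost x (s ++ t) = walk_cost x s + walk_cost (last x s) t.
Proof. by elim: s x => [|y s IH] x /=; rewrite ?add0r // IH addrA. Qed.

Lemma walk_cost_rcons x s y :
  walk_cost x (rcons s y) = walk_cost x s + dist (last x s) y.
Proof. by rewrite -cats1 walk_cost_cat /= addr0. Qed.

Lemma walk_cost_pairmap x s :
  walk_cost x s = \sum_(p <- pairmap pair x s) dist p.1 p.2.
Proof. by elim: s x => [|y s IH] x /=; rewrite ?big_nil // big_cons IH. Qed.

Lemma walk_cost_filter (P : pred V) x t y :
  P y -> walk_cost x (rcons (filter P t) y) <= walk_cost x (rcons t y).
Proof.
move=> Py; elim: t x => [|z t IH] x //=.
case: (P z) => /=; first by rewrite lerD2l.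
apply: le_trans (IH x) _; case: t {IH} => [|w r] /=; rewrite addrA lerD2r;
  exact: dist_triangle.
Qed.

Lemma tour_cost_rot p a q : tour_cost (p ++ a :: q) = tour_cost (a :: q ++ p).
Proof.
case: p => [|x p] /=; first by rewrite cats0.
rewrite rcons_cat /= walk_cost_cat /= walk_cost_rcons rcons_cat walk_cost_cat /=.
by rewrite walk_cost_rcons [RHS]addrA [RHS]addrC -!addrA.
Qed.

Lemma tour_cost_rot_head (s : seq V) a :
  a \in s -> exists t, s =i a :: t /\ tour_cost (a :: t) = tour_cost s.
Proof.
case/splitPr=> p q; exists (q ++ p); rewrite tour_cost_rot; split => // z.
by rewrite mem_cat !inE mem_cat; case: (z \in p); case: (z \in q); rewrite ?orbT.
Qed.

Lemma tour_cost_splice a t1 b t2 :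
  tour_cost (a :: t1 ++ b :: t2) <=
    tour_cost (a :: t1) + tour_cost (b :: t2) + 2 * dist a b.
Proof.
rewrite /= rcons_cat walk_cost_cat /= !walk_cost_rcons.
set la := last a t1; set lb := last b t2.
have h1 := dist_triangle la a b; have h2 := dist_triangle lb b a.
rewrite [dist b a]distC in h2.
rewrite mulr2n mulrDl !mul1r.
apply: (le_trans (y := walk_cost a t1 + ((dist la a + dist a b) +
  (walk_cost b t2 + (dist lb b + dist a b))))).
  by rewrite lerD2l lerD // lerD2l.
by rewrite [X in X <= _](AC (1*(2*(1*2))) (((1*2)*(4*5))*(3*6))).
Qed.

Lemma tree_cost_component_edges (E : {set {set V}}) a b :
  {in E, forall e, is_edge e} -> ~~ connect (adj E) a b ->
  tree_cost c (component_edges E a) + tree_cost c (component_edges E b) <= tree_cost c E.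
Proof.
move=> Eedge nab; rewrite /tree_cost -bigU ?component_edges_disjoint //=.
rewrite (eq_bigl [in component_edges E a :|: component_edges E b]); last by move=> f; rewrite !inE.
apply: ler_sum_subset; first by rewrite subUset !component_edges_sub.
by move=> f /Eedge /c_ge0.
Qed.

(* Doubling the edges and shortcutting an Euler tour, done by induction: delete
   an edge {a, b}; if it is a bridge of the component of [v], splice the tours
   of its two sides at [a] and [b]. *)
Lemma double_tree_tour (E : {set {set V}}) v : {in E, forall e, is_edge e} ->
  exists2 s : seq V, {subset component E v <= s} & tour_cost s <= 2 * tree_cost c E.
Proof.
have [n] := ubnP #|E|; elim: n E v => // n IH E v ltEn Eedge.
have [-> | /set0Pn[e eE]] := eqVneq E set0.
  exists [:: v]; first by move=> u; rewrite inE => /connect_set0 ->; rewrite inE.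
  by rewrite /tree_cost big_set0 mulr0 /= /dist eqxx addr0.
have /cards2P[a [b [ab De]]] := Eedge e eE; subst e.
set E' := E :\ [set a; b].
have ltE'n : (#|E'| < n)%N by move: ltEn; rewrite (cardsD1 [set a; b] E) eE.
have E'edge : {in E', forall e, is_edge e} by move=> f /setD1P[_ /Eedge].
have costE : tree_cost c E = c [set a; b] + tree_cost c E'.
  by rewrite /tree_cost (big_setD1 _ eE).
have [sub_vE'|] := boolP (component E v \subset component E' v).
  have [s covers cost_s] := IH E' v ltE'n E'edge.
  exists s; first by move=> u /(subsetP sub_vE') /covers.
  by apply: le_trans cost_s _; rewrite costE ler_wpM2l // lerDr c_ge0 ?Eedge.
case/component_setD1_bridge => nab vE'.
have side x : exists t, {subset component E' x <= x :: t} /\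
    tour_cost (x :: t) <= 2 * tree_cost c (component_edges E' x).
  have sub_x := component_edges_sub E' x.
  have [s covers cost_s] := IH (component_edges E' x) x
    (leq_ltn_trans (subset_leq_card sub_x) ltE'n) (sub_in1 (subsetP sub_x) E'edge).
  have [|t [st cost_t]] := tour_cost_rot_head (covers x _); first by rewrite inE connect0.
  exists t; split; last by rewrite cost_t.
  by move=> u; rewrite inE => /connect_component_edges xu; rewrite -st covers ?inE.
have [ta [cover_a cost_a]] := side a; have [tb [cover_b cost_b]] := side b.
exists (a :: ta ++ b :: tb).
  move=> u /(subsetP vE'); rewrite -cat_cons mem_cat in_setU.
  by case/orP=> [/cover_a ->|/cover_b ->]; rewrite ?orbT.
apply: le_trans (tour_cost_splice _ _ _ _) _.
rewrite costE /dist (negbTE ab) mulrDr addrC lerD2l.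
apply: le_trans (lerD cost_a cost_b) _.
by rewrite -mulrDr ler_wpM2l // tree_cost_component_edges.
Qed.

Lemma shortcut_walk (E : {set {set V}}) (K : {set V}) :
  {in E, forall e, is_edge e} -> connected_on E K -> K != set0 ->
  exists k0 t, [set z | z \in k0 :: t] = K /\ walk_cost k0 t <= 2 * tree_cost c E.
Proof.
move=> Eedge Kconn /set0Pn[k0 k0K].
have [s covers cost_s] := double_tree_tour k0 Eedge.
have [|t [st cost_t]] := tour_cost_rot_head (covers k0 _); first by rewrite inE connect0.
exists k0, (filter (mem K) t); split.
  apply/setP => z; rewrite !inE mem_filter; have [->|zk0] //= := eqVneq z k0.
  apply/andP/idP => [[]//|zK]; split => //.
  by move: (covers z); rewrite inE Kconn // st inE (negbTE zk0); apply.
apply: le_trans cost_s; rewrite -cost_t /=.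
apply: le_trans (walk_cost_filter (P := mem K) k0 t k0K).
by rewrite walk_cost_rcons lerDl dist_ge0.
Qed.

End Walks.

Section SpanningTrees.
Variables (V : finType) (F : realFieldType) (c : {set V} -> F).

Lemma connect_setD1_cycle (T : {set {set V}}) x y q :
  uniq [:: x, y & q] -> q != [::] -> cycle (adj T) [:: x, y & q] ->
  subrel (connect (adj T)) (connect (adj (T :\ [set x; y]))).
Proof.
rewrite /= rcons_path !inE negb_or => /andP[/andP[xy xq] /andP[yq _]] q0.
case/and3P=> _ yq_path qx.
set T' := T :\ [set x; y].
have adjT' u w : adj T u w -> [set u; w] != [set x; y] -> adj T' u w.
  by rewrite /adj /T' in_setD1 => -> ->.
have yx : connect (adj T') y x.
  apply/connectP; exists (rcons q x); last by rewrite last_rcons.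
  rewrite rcons_path adjT' //= ?andbT; last first.
    have lq : last y q \in q by case: (q) q0 => // z q' _ /=; exact: mem_last.
    apply/eqP => e; have : y \in [set last y q; x] by rewrite e !inE eqxx orbT.
    by rewrite !inE (eq_sym y x) (negbTE xy) orbF => /eqP ylast; rewrite -ylast (negbTE yq) in lq.
  apply: (@sub_in_path _ (predC1 x)) yq_path; last first.
    by rewrite /= eq_sym xy; apply/allP => z zq /=; apply: contraNneq xq => <-.
  move=> u w /= ux wx /adjT'; apply; apply: contraNneq ux => uwxy.
  have : x \in [set u; w] by rewrite uwxy setU11.
  by rewrite !inE => /orP[/eqP<-//|/eqP xw]; rewrite -xw !inE eqxx in wx.
apply: connect_sub => u w Tuw.
have [uwxy|] := eqVneq [set u; w] [set x; y]; last by move/(adjT' _ _ Tuw)/connect1.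
have xy' : connect (adj T') x y by rewrite connectC.
have : u \in [set x; y] by rewrite -uwxy setU11.
have : w \in [set x; y] by rewrite -uwxy !inE eqxx orbT.
by rewrite !inE => /orP[]/eqP-> /orP[]/eqP->.
Qed.

Lemma mst_cost_le_spanning_tree (R : {set V}) (T : {set {set V}}) :
  is_spanning_tree R T -> mst_cost c R <= tree_cost c T.
Proof.
move=> Ttree; have [_] := arg_min_nonempty (P := fun E => asbool (is_spanning_tree R E))
  (tree_cost c) set0 (asboolT Ttree).
by apply; apply: asboolT.
Qed.

Hypothesis c_ge0 : forall e : {set V}, is_edge e -> 0 <= c e.

(* A minimum-cardinality connected subset of [E] is a spanning tree. *)
Lemma mst_cost_le_connected (R : {set V}) (E : {set {set V}}) :
  {in E, forall e, is_edge e && (e \subset R)} -> connected_on E R ->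
  mst_cost c R <= tree_cost c E.
Proof.
move=> Eedge Econn.
pose Q (T : {set {set V}}) := (T \subset E) && asbool (connected_on T R).
have QE : Q E by rewrite /Q subxx asboolT.
case: (arg_minnP (fun T : {set {set V}} => #|T|) QE) => T /andP[TE /asboolP Tconn] Tmin.
have Ttree : is_spanning_tree R T.
  split=> [e /(subsetP TE) /Eedge //|//|]; case=> [|x [|y q]] //= Up p3; apply/negP => Tcyc.
  have q0 : q != [::] by case: (q) p3.
  have xyT : [set x; y] \in T by case/andP: Tcyc.
  have /Tmin : Q (T :\ [set x; y]).
    rewrite /Q (subset_trans (subD1set _ _) TE) asboolT // => u v uR vR.
    exact: connect_setD1_cycle Up q0 Tcyc _ _ (Tconn u v uR vR).
  by rewrite (cardsD1 [set x; y] T) xyT add1n ltnn.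
apply: le_trans (mst_cost_le_spanning_tree Ttree) _.
by apply: ler_sum_subset => // e /Eedge /andP[/c_ge0].
Qed.

End SpanningTrees.

(* A partition of [R] is given by the fibres of a map [f : V -> V], and a
   fractional edge set by a list [L] of weighted pairs [(x, (u, v))];
   [L_partition] says that [L] dominates a point of the partition polytope. *)
Section PartitionBound.
Variables (V : finType) (F : realFieldType) (c : {set V} -> F).
Hypothesis c_ge0 : forall e : {set V}, is_edge e -> 0 <= c e.
Variables (R : {set V}) (L : seq (F * (V * V))).
Hypothesis L_wf : forall t, t \in L -> [/\ 0 <= t.1, t.2.1 \in R & t.2.2 \in R].

Definition weight_across (f : V -> V) : F := \sum_(t <- L | f t.2.1 != f t.2.2) t.1.

Definition excess_across (f : V -> V) (l : F) : F :=
  \sum_(t <- L | f t.2.1 != f t.2.2) t.1 * (dist c t.2.1 t.2.2 - l).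

Hypothesis L_partition : forall f : V -> V, #|f @: R|%:R - 1 <= weight_across f.

Definition adj_or_same (f : V -> V) (E : {set {set V}}) : rel V :=
  fun u w => adj E u w || (f u == f w).

Definition merge (f : V -> V) (a b : V) (x : V) : V :=
  if f x == f b then f a else f x.

Section CrossingCost.
Variables (f : V -> V) (l : F).
Hypothesis l_le_dist : forall u w, u \in R -> w \in R -> f u != f w -> l <= dist c u w.

Lemma excess_across_ge0 : 0 <= excess_across f l.
Proof.
rewrite /excess_across big_seq_cond; apply: sumr_ge0 => t /andP[/L_wf[t1 t21 t22] ft].
by rewrite mulr_ge0 // subr_ge0 l_le_dist.
Qed.

Lemma excess_across_shift m : excess_across f l = excess_across f m + weight_across f * (m - l).
Proof.
rewrite /excess_across /weight_across mulr_suml -big_split /=.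
by apply: eq_bigr => t _; rewrite -mulrDr addrA subrK.
Qed.

Lemma excess_across_coarsen (f' : V -> V) :
  (forall u w, f' u != f' w -> f u != f w) -> excess_across f' l <= excess_across f l.
Proof.
move=> f'f; apply: ler_sum_seq_cond => t tL; first exact: f'f.
by case/L_wf: tL => t1 t21 t22 ft; rewrite mulr_ge0 // subr_ge0 l_le_dist.
Qed.

End CrossingCost.

Section Merge.
Variables (f : V -> V) (a b : V).
Hypotheses (aR : a \in R) (bR : b \in R) (fab : f a != f b).

Lemma imset_merge : merge f a b @: R = f @: R :\ f b.
Proof.
apply/setP => y; apply/imsetP/setD1P => [[x xR ->]|[yfb /imsetP[x xR yfx]]].
  by rewrite /merge; case: (eqVneq (f x) (f b)) => fxb; split => //; apply: imset_f.
by exists x => //; rewrite /merge -yfx (negbTE yfb).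
Qed.

Lemma merge_neq u w : merge f a b u != merge f a b w -> f u != f w.
Proof. by apply: contra => /eqP fuw; rewrite /merge fuw. Qed.

Lemma connect_merge (E : {set {set V}}) :
  subrel (connect (adj_or_same (merge f a b) E))
         (connect (adj_or_same f ([set a; b] |: E))).
Proof.
set E' := [set a; b] |: E.
have same x y : f x == f y -> connect (adj_or_same f E') x y.
  by move=> fxy; apply: connect1; rewrite /adj_or_same fxy orbT.
have ab : connect (adj_or_same f E') a b by apply: connect1; rewrite /adj_or_same /adj setU11.
have ba : connect (adj_or_same f E') b a by rewrite (sym_connect_sym _) // => x y; rewrite /adj_or_same adjC eq_sym.
apply: connect_sub => x y /orP[Exy|].
  by apply: connect1; rewrite /adj_or_same /adj setU1r.
rewrite /merge; case: (eqVneq (f x) (f b)) => fx; case: (eqVneq (f y) (f b)) => fy fxy.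
- by apply: same; rewrite fx fy.
- by apply: connect_trans (same x b _) (connect_trans ba (same a y fxy)); rewrite fx.
- by apply: connect_trans (same x a fxy) (connect_trans ab (same b y _)); rewrite fy.
- exact: same.
Qed.

End Merge.

Lemma min_crossing_pair (f : V -> V) : (1 < #|f @: R|)%N ->
  exists a b, [/\ a \in R, b \in R, f a != f b &
    forall u w, u \in R -> w \in R -> f u != f w -> dist c a b <= dist c u w].
Proof.
case/card_gt1P=> _ [_ [/imsetP[u0 u0R ->] /imsetP[w0 w0R ->] fuw0]].
pose P (p : V * V) := [&& p.1 \in R, p.2 \in R & f p.1 != f p.2].
have P0 : P (u0, w0) by apply/and3P.
case: (arg_minP (fun p => dist c p.1 p.2) P0) => -[a b] /and3P[aR bR fab] minab.
by exists a, b; split => // u w uR wR fuw; apply: (minab (u, w)); apply/and3P.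
Qed.

Lemma excess_across_step (f f' : V -> V) (l m : F) (E : {set {set V}}) :
  (#|E|.+1 < #|f @: R|)%N -> l <= m ->
  (forall u w, u \in R -> w \in R -> f u != f w -> m <= dist c u w) ->
  (forall u w, f' u != f' w -> f u != f w) ->
  \sum_(e in E) (c e - m) <= excess_across f' m ->
  (m - l) + \sum_(e in E) (c e - l) <= excess_across f l.
Proof.
move=> Ef l_m m_le f'f Ecost.
have sumE : \sum_(e in E) (c e - l) = \sum_(e in E) (c e - m) + (m - l) *+ #|E|.
  by rewrite -sumr_const -big_split /=; apply: eq_bigr => e _; rewrite addrA subrK.
have weight_E : #|E|.+1%:R <= weight_across f.
  by apply: le_trans (L_partition f); rewrite lerBrDr natr1 ler_nat.
rewrite sumE (excess_across_shift f l m) addrCA -mulrS lerD //.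
  exact: le_trans Ecost (excess_across_coarsen m_le f'f).
by rewrite -mulr_natl ler_wpM2r ?subr_ge0.
Qed.

(* Kruskal's algorithm with a rising threshold [l]: contract a cheapest
   crossing pair, whose cost becomes the next threshold. *)
Lemma kruskal_bound n (f : V -> V) (l : F) :
  #|f @: R| = n.+1 ->
  (forall u w, u \in R -> w \in R -> f u != f w -> l <= dist c u w) ->
  exists E : {set {set V}}, [/\ {in E, forall e, is_edge e && (e \subset R)},
     (#|E| <= n)%N,
     {in R &, forall u w, connect (adj_or_same f E) u w} &
     \sum_(e in E) (c e - l) <= excess_across f l].
Proof.
elim: n f l => [|n IH] f l fR l_le.
  have /cards1P[y fRy] : #|f @: R| == 1%N by rewrite fR.
  have fy u : u \in R -> f u = y by move=> uR; apply/set1P; rewrite -fRy imset_f.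
  exists set0; split; rewrite ?cards0 ?big_set0 ?excess_across_ge0 //.
    by move=> e; rewrite inE.
  by move=> u w uR wR; apply: connect1; rewrite /adj_or_same !fy ?eqxx ?orbT.
have [|a [b [aR bR fab minab]]] := @min_crossing_pair f; first by rewrite fR.
have ab : a != b by apply: contraNneq fab => ->.
set m := dist c a b.
have cab : c [set a; b] = m by rewrite /m /dist (negbTE ab).
have l_m : l <= m := l_le a b aR bR fab.
have mR : #|merge f a b @: R| = n.+1.
  by move: fR; rewrite imset_merge // (cardsD1 (f b)) imset_f // add1n => -[].
have m_le u w : u \in R -> w \in R -> merge f a b u != merge f a b w -> m <= dist c u w.
  by move=> uR wR /merge_neq; apply: minab.
have [E [Eedge En Econn Ecost]] := IH _ _ mR m_le.
exists ([set a; b] |: E); split.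
- move=> e /setU1P[-> | /Eedge //]; rewrite is_edge_set2 //=.
  by apply/subsetP => z; rewrite !inE => /orP[] /eqP ->.
- by rewrite cardsU1 -add1n leq_add ?leq_b1.
- by move=> u w uR wR; apply/connect_merge/Econn.
apply: le_trans (ler_sum_setU1 _ _) _; first by rewrite cab subr_ge0.
rewrite cab; apply: excess_across_step l_m minab (@merge_neq f a b) Ecost.
by rewrite fR !ltnS.
Qed.

Lemma connected_le_excess :
  exists E : {set {set V}}, [/\ {in E, forall e, is_edge e && (e \subset R)},
     connected_on E R & tree_cost c E <= \sum_(t <- L) t.1 * dist c t.2.1 t.2.2].
Proof.
have [R0|/set0Pn[r0 r0R]] := eqVneq R set0.
  exists set0; split; rewrite /tree_cost ?big_set0 /connected_on ?R0 //.
  - by move=> e; rewrite inE.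
  - by move=> u v; rewrite inE.
  - by rewrite big_seq; apply: sumr_ge0 => t /L_wf[t1 _ _]; rewrite mulr_ge0 ?dist_ge0.
have idR : #|id @: R| = #|R|.-1.+1 by rewrite imset_id prednK //; apply/card_gt0P; exists r0.
have [|E [Eedge _ Econn Ecost]] := kruskal_bound idR (l := 0); first by move=> *; apply: dist_ge0.
exists E; split => //.
  move=> u v uR vR; apply: connect_sub (Econn u v uR vR) => x y /orP[/connect1 //|/eqP->].
  exact: connect0.
rewrite /tree_cost; under eq_bigr do rewrite -[c _]subr0.
apply: le_trans Ecost _; rewrite /excess_across; under eq_bigr do rewrite subr0.
by apply: ler_sum_seq_cond => // t /L_wf[t1 _ _] _; rewrite mulr_ge0 ?dist_ge0.
Qed.

End PartitionBound.

Section HypergraphicLP.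
Variables (V : finType) (F : realFieldType) (c : {set V} -> F) (R : {set V}).

Definition fibre (f : V -> V) (A : {set V}) (v : V) : {set V} := [set u in A | f u == v].

Lemma card_fibres (f : V -> V) (A : {set V}) :
  #|A| = (\sum_(v in f @: A) #|fibre f A v|)%N.
Proof.
rewrite -sum1_card (partition_big_imset f); apply: eq_bigr => v _.
by rewrite -sum1_card; apply: eq_bigl => u; rewrite inE.
Qed.

Lemma card_sub_fibres (f : V -> V) (A K : {set V}) : K \subset A ->
  (#|K|%:R : F) - 1 = (#|f @: K|%:R - 1) +
    \sum_(v in f @: A | K :&: fibre f A v != set0) (#|K :&: fibre f A v|%:R - 1).
Proof.
move=> KA; rewrite (eq_bigl [in f @: K]); last first.
  move=> v; apply/andP/imsetP => [[_ /set0Pn[u]]|[u uK ->]].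
    by rewrite !inE => /and3P[uK _ /eqP <-]; exists u.
  split; first exact/imset_f/(subsetP KA).
  by apply/set0Pn; exists u; rewrite !inE uK (subsetP KA) //= eqxx.
rewrite sumrB sumr_const -natr_sum (card_fibres f K) [RHS]addrC addrA subrK.
congr (_%:R - _); apply: eq_bigr => v _; apply: eq_card => u.
by rewrite !inE; case uK: (u \in K) => //=; rewrite (subsetP KA).
Qed.

(* The subtour constraints, applied to the classes of a partition of [R] and
   subtracted from the equality constraint, give the partition inequality. *)
Lemma lp_partition_inequality (x : {set V} -> F) (f : V -> V) :
  lp_feasible R x ->
  #|f @: R|%:R - 1 <= \sum_(K | lp_index R K) x K * (#|f @: K|%:R - 1).
Proof.
case=> _ subtour total.
set I := f @: R; pose S := fibre f R.
have SR v : S v \subset R by apply/subsetP => u; rewrite inE => /andP[].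
have S0 v : v \in I -> S v != set0.
  by case/imsetP=> u uR ->; apply/set0Pn; exists u; rewrite inE uR eqxx.
set A := \sum_(K | lp_index R K) x K * (#|f @: K|%:R - 1).
set B := \sum_(v in I) \sum_(K | lp_index R K && (K :&: S v != set0))
  x K * (#|K :&: S v|%:R - 1).
have totalAB : \sum_(K | lp_index R K) x K * (#|K|%:R - 1) = A + B.
  rewrite (eq_bigr (fun K => x K * (#|f @: K|%:R - 1) +
      \sum_(v in I | K :&: S v != set0) x K * (#|K :&: S v|%:R - 1))); last first.
    by move=> K /and3P[KR _ _]; rewrite (card_sub_fibres f KR) mulrDr mulr_sumr.
  rewrite big_split /=; congr (_ + _).
  under eq_bigr do rewrite big_mkcondr.
  by rewrite exchange_big /=; apply: eq_bigr => v _; rewrite -big_mkcondr.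
have B_le : B <= #|R|%:R - #|I|%:R.
  apply: (le_trans (y := \sum_(v in I) ((#|S v|%:R : F) - 1))).
    by apply: ler_sum => v vI; apply: subtour; [apply: SR | apply: S0].
  by rewrite sumrB sumr_const -natr_sum (card_fibres f R).
have -> : A = #|R|%:R - 1 - B by rewrite -total totalAB addrK.
have -> : (#|I|%:R : F) - 1 = #|R|%:R - 1 - (#|R|%:R - #|I|%:R).
  by rewrite opprB [RHS]addrC addrA subrK.
by rewrite lerD2l lerN2.
Qed.

Lemma card_imset_walk (f : V -> V) (x : V) (t : seq V) :
  (#|f @: [set z | z \in x :: t]| <= 1 + count (fun p => f p.1 != f p.2) (pairmap pair x t))%N.
Proof.
elim: t x => [|y t IH] x.
  by rewrite (_ : [set z | z \in [:: x]] = [set x]) ?imset_set1 ?cards1 //; apply/setP => z; rewrite !inE.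
rewrite (_ : [set z | z \in [:: x, y & t]] = x |: [set z | z \in y :: t]); last first.
  by apply/setP => z; rewrite !inE.
rewrite imsetU1 cardsU1 /=.
have fy : f y \in f @: [set z | z \in y :: t] by rewrite imset_f // inE mem_head.
case: (eqVneq (f x) (f y)) => [->|_] /=; first by rewrite fy; apply: IH.
exact: leq_add (leq_b1 _) (IH y).
Qed.

Lemma mem_pairmap_pair (x : V) (s : seq V) p :
  p \in pairmap pair x s -> p.1 \in x :: s /\ p.2 \in x :: s.
Proof.
elim: s x => [|y s IH] x //= /predU1P[-> | /IH[p1 p2]]; first by rewrite !inE !eqxx orbT.
by split; rewrite in_cons ?p1 ?p2 orbT.
Qed.

Lemma leaves_sub_verts (E : {set {set V}}) : leaves E \subset verts E.
Proof.
apply/subsetP => z; rewrite inE /deg => /eqP dz.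
have /card_gt0P[e] : (0 < #|[set e in E | z \in e]|)%N by rewrite dz.
by rewrite inE => /andP[eE ze]; apply/bigcupP; exists e.
Qed.

Lemma full_component_CK (K : {set V}) : has_full_component R K ->
  exists2 E, is_full_component R K E & tree_cost c E = CK c R K.
Proof.
case=> E0 E0full; set P := fun E => asbool (is_full_component R K E).
have [Efull _] := arg_min_nonempty (P := P) (tree_cost c) set0 (asboolT E0full).
by eexists; first exact: asboolP Efull.
Qed.

Hypothesis c_ge0 : forall e : {set V}, is_edge e -> 0 <= c e.
Hypothesis c_triangle : forall u v w : V, u != v -> v != w -> u != w ->
  c [set u; w] <= c [set u; v] + c [set v; w].

Lemma lp_index_walk (K : {set V}) : lp_index R K ->
  exists k0 t, [set z | z \in k0 :: t] = K /\ walk_cost c k0 t <= 2 * CK c R K.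
Proof.
case/and3P=> _ K2 /asboolP /full_component_CK[E [[Eedge Econn _] leavesK _] <-].
apply: shortcut_walk => //; last by rewrite -card_gt0 (leq_trans _ K2).
move=> u w; rewrite -leavesK => /(subsetP (leaves_sub_verts E)) uE.
by move/(subsetP (leaves_sub_verts E)); apply: Econn.
Qed.

(* Each LP variable [x K] weights the consecutive pairs of a short walk
   through [K]. *)
Lemma lp_weighted_walks (x : {set V} -> F) (Ks : seq {set V}) :
  {in Ks, forall K, lp_index R K /\ 0 <= x K} ->
  exists L : seq (F * (V * V)), [/\
    forall t, t \in L -> [/\ 0 <= t.1, t.2.1 \in R & t.2.2 \in R],
    forall f : V -> V, \sum_(K <- Ks) x K * (#|f @: K|%:R - 1) <= weight_across L f &
    \sum_(t <- L) t.1 * dist c t.2.1 t.2.2 <= 2 * \sum_(K <- Ks) CK c R K * x K].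
Proof.
elim: Ks => [|K Ks IH] Ks_ok.
  by exists [::]; split => // [f|]; rewrite /weight_across !big_nil ?mulr0.
have [|L [Lwf Lpart Lcost]] := IH; first by move=> K' K'Ks; apply: Ks_ok; rewrite inE K'Ks orbT.
have [lpK xK0] := Ks_ok K (mem_head K Ks); have /and3P[KR _ _] := lpK.
have [k0 [t [Kt walk_le]]] := lp_index_walk lpK.
exists ([seq (x K, p) | p <- pairmap pair k0 t] ++ L); split.
- move=> u; rewrite mem_cat => /orP[/mapP[p /mem_pairmap_pair[p1 p2] ->]|/Lwf //].
  by split=> //=; apply: (subsetP KR); rewrite -Kt inE.
- move=> f; rewrite /weight_across big_cat big_cons /= lerD // big_map big_const_seq iter_addr_0.
  rewrite -[x K *+ _]mulr_natr ler_wpM2l // lerBlDl addrC natr1 ler_nat -Kt.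
  exact: card_imset_walk.
rewrite big_cat big_cons mulrDr lerD // big_map -mulr_sumr -walk_cost_pairmap.
by rewrite mulrA [_ * x K]mulrC ler_wpM2l.
Qed.

End HypergraphicLP.

Unset Implicit Arguments.

Theorem lemma2 (V : finType) (F : realFieldType) (c : {set V} -> F)
  (R : {set V})
  (c_nonneg : forall e : {set V}, is_edge e -> 0 <= c e)
  (c_triangle : forall u v w : V, u != v -> v != w -> u != w ->
     c [set u; w] <= c [set u; v] + c [set v; w]) :
  forall x : {set V} -> F, lp_feasible R x ->
    mst_cost c R <= 2 * lp_objective c R x.
Proof.
move=> x feas; have [x_ge0 _ _] := feas.
pose Ks := enum [pred K | lp_index R K].
have sum_Ks (g : {set V} -> F) : \sum_(K <- Ks) g K = \sum_(K | lp_index R K) g K.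
  exact: big_enum.
have Ks_ok : {in Ks, forall K, lp_index R K /\ 0 <= x K}.
  by move=> K; rewrite mem_enum => lpK; split; last exact: x_ge0.
have [L [Lwf Lpart Lcost]] := lp_weighted_walks c_nonneg c_triangle Ks_ok.
have L_partition f : #|f @: R|%:R - 1 <= weight_across L f.
  by apply: le_trans (lp_partition_inequality f feas) _; rewrite -sum_Ks.
have [E [Eedge Econn Ecost]] := connected_le_excess c_nonneg Lwf L_partition.
apply: le_trans (mst_cost_le_connected c_nonneg Eedge Econn) _.
by apply: le_trans Ecost (le_trans Lcost _); rewrite sum_Ks.
Qed.
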